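(* Let $\alpha\in(\frac{2\pi}{3},\pi)$. Then $M_b^\|(n,\alpha)\geq 6n-O(\sqrt{n})$, i.e., there is a constant $c>0$ such that for every positive integer $n$ there exists an $\alpha$-bend multigraph on $n$ vertices with at least $6n-c\sqrt{n}$ edges.
   Context: For $\alpha\in(0,\pi)$, an $\alpha$-bend edge between points $a$ and $c$ is a polyline $(a,b,c)$ with a single bend point $b$ (not on the line $ac$) such that the interior angle of the triangle $abc$ at $b$ equals $\alpha$. An $\alpha$-bend multigraph is a multigraph embedded in the plane (vertices are distinct points; edges pairwise do not cross, meet only at common endpoints, and contain no vertex in their relative interior; parallel edges allowed) in which every edge is an $\alpha$-bend edge. $M_b^\|(n,\alpha)$ is the supremum, over all $n$-element sets $P\subset\mathbb{R}^2$, of the maximum number of edges of an $\alpha$-bend multigraph with vertex set $P$. *)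

From Stdlib Require Import Reals Lra List.
Open Scope R_scope.

Definition point : Type := (R * R)%type.

Definition psub (p q : point) : point := (fst p - fst q, snd p - snd q).
Definition dot (u v : point) : R := fst u * fst v + snd u * snd v.
Definition vnorm (u : point) : R := sqrt (dot u u).
Definition cross (u v : point) : R := fst u * snd v - snd u * fst v.

Definition on_seg (p q x : point) : Prop :=
  exists t, 0 <= t <= 1 /\
    x = (fst p + t * (fst q - fst p), snd p + t * (snd q - snd p)).

Definition on_line (a c b : point) : Prop := cross (psub c a) (psub b a) = 0.

Definition angle_at (a b c : point) : R :=
  acos (dot (psub a b) (psub c b) / (vnorm (psub a b) * vnorm (psub c b))).

(* an edge is a polyline (a, b, c): endpoints a, c and bend point b *)
Definition edge : Type := (point * point * point)%type.
Definition e_a (e : edge) : point := fst (fst e).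
Definition e_b (e : edge) : point := snd (fst e).
Definition e_c (e : edge) : point := snd e.

Definition on_edge (e : edge) (x : point) : Prop :=
  on_seg (e_a e) (e_b e) x \/ on_seg (e_b e) (e_c e) x.

Definition is_endpoint (e : edge) (x : point) : Prop := x = e_a e \/ x = e_c e.

Definition alpha_bend_edge (alpha : R) (e : edge) : Prop :=
  e_a e <> e_c e /\ ~ on_line (e_a e) (e_c e) (e_b e) /\
  angle_at (e_a e) (e_b e) (e_c e) = alpha.

(* alpha-bend multigraph with vertex set P (a duplicate-free list of points)
   and edge list E (a list, so parallel edges are allowed) *)
Definition alpha_bend_multigraph (alpha : R) (P : list point) (E : list edge) : Prop :=
  NoDup P /\
  (forall e, In e E -> alpha_bend_edge alpha e /\ In (e_a e) P /\ In (e_c e) P) /\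
  (forall e v, In e E -> In v P -> on_edge e v -> is_endpoint e v) /\
  (forall i j, (i < length E)%nat -> (j < length E)%nat -> i <> j ->
     forall x, on_edge (nth i E ((0,0),(0,0),(0,0))) x ->
               on_edge (nth j E ((0,0),(0,0),(0,0))) x ->
     is_endpoint (nth i E ((0,0),(0,0),(0,0))) x /\
     is_endpoint (nth j E ((0,0),(0,0),(0,0))) x).

From Stdlib Require Import Reals Lra Lia List.
Import ListNotations.
Open Scope R_scope.

(* Take a roughly square patch of n points of the triangular lattice and draw
   over every unit lattice segment two alpha-bend edges, bulging to opposite
   sides, with the bend on the perpendicular bisector at distance s*sqrt 3
   from the segment, where cos alpha = (3 s^2 - 1/4) / (3 s^2 + 1/4); the
   hypothesis alpha > 2 pi / 3 is exactly what allows s < 1/6.  Almost all of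
   the about 3n lattice segments are used, giving 6n - O(sqrt n) edges.
   Non-crossing: a point at parameter l on the edge over a segment of
   direction d is within 4 s m of the lattice line of that segment, m being
   min(l, 1 - l), but at distance at least (1 - 2 s) m from every lattice line
   of the two other directions (distances measured in lattice coordinates).
   For two edges of different directions through a common point this forces
   (1 - 6 s)(m + m') <= 0, so both points are endpoints; parallel edges are
   separated by the same two estimates along and across their common line. *)

Definition lattice (p : R * R) : point :=
  (fst p + snd p / 2, sqrt 3 * snd p / 2).

Lemma sqrt3_sqr : sqrt 3 * sqrt 3 = 3.
Proof. apply sqrt_sqrt; lra. Qed.

Lemma lattice_inj p q : lattice p = lattice q -> p = q.
Proof.
  destruct p as [u v], q as [u' v']; unfold lattice; simpl; intros H.
  injection H as Hx Hy.
  assert (Hv : v = v').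
  { apply Rmult_eq_reg_l with (sqrt 3 / 2); [lra|].
    apply Rgt_not_eq, Rdiv_lt_0_compat; [apply sqrt_lt_R0|]; lra. }
  subst v'; f_equal; lra.
Qed.

Lemma psub_lattice p q :
  psub (lattice p) (lattice q) = lattice (fst p - fst q, snd p - snd q).
Proof. unfold psub, lattice; simpl; f_equal; field. Qed.

Lemma dot_lattice p q :
  dot (lattice p) (lattice q) =
  fst p * fst q + (fst p * snd q + snd p * fst q) / 2 + snd p * snd q.
Proof.
  unfold dot, lattice; simpl.
  replace (sqrt 3 * snd p / 2 * (sqrt 3 * snd q / 2))
    with (sqrt 3 * sqrt 3 * (snd p * snd q) / 4) by field.
  rewrite sqrt3_sqr; field.
Qed.

Lemma cross_lattice p q :
  cross (lattice p) (lattice q) = sqrt 3 / 2 * (fst p * snd q - snd p * fst q).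
Proof. unfold cross, lattice; simpl; field. Qed.

Lemma lattice_on_seg p q x : on_seg (lattice p) (lattice q) x ->
  exists t, 0 <= t <= 1 /\
    x = lattice (fst p + t * (fst q - fst p), snd p + t * (snd q - snd p)).
Proof.
  intros [t [Ht ->]]; exists t; split; [exact Ht|].
  unfold lattice; simpl; f_equal; field.
Qed.

Inductive dir := dir0 | dir60 | dir120.

Definition tangent (d : dir) : R * R :=
  match d with dir0 => (1, 0) | dir60 => (0, 1) | dir120 => (-1, 1) end.

(* [normal d] is orthogonal to [tangent d] in the plane and sqrt 3 times as long. *)
Definition normal (d : dir) : R * R :=
  match d with dir0 => (-1, 2) | dir60 => (-2, 1) | dir120 => (-1, -1) end.

(* [level d] is constant on the lattice lines of direction [d]. *)
Definition level (d : dir) (p : R * R) : R :=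
  match d with dir0 => snd p | dir60 => fst p | dir120 => fst p + snd p end.

Definition along (d : dir) (p : R * R) : R :=
  match d with dir0 => fst p | _ => snd p end.

(* Cell (i, j) carries the segments from (i, j) in directions 0 and 60 degrees
   and the segment from (i + 1, j) to (i, j + 1). *)
Definition start (c : nat * nat) (d : dir) : R * R :=
  match d with
  | dir120 => (INR (S (fst c)), INR (snd c))
  | _ => (INR (fst c), INR (snd c))
  end.

Definition side (b : bool) : R := if b then 1 else -1.

Definition tent (l : R) : R := Rmin l (1 - l).

(* The bend, at [l = 1/2], is displaced by [s * normal d] to the side [b]. *)
Definition trace (s : R) (c : nat * nat) (d : dir) (b : bool) (l : R) : R * R :=
  (fst (start c d) + l * fst (tangent d) + side b * 2 * s * tent l * fst (normal d),
   snd (start c d) + l * snd (tangent d) + side b * 2 * s * tent l * snd (normal d)).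

Definition bent_edge (s : R) (c : nat * nat) (d : dir) (b : bool) : edge :=
  (lattice (trace s c d b 0), lattice (trace s c d b (1 / 2)), lattice (trace s c d b 1)).

Lemma tent_bounds l : 0 <= l <= 1 -> 0 <= tent l /\ tent l <= l /\ tent l <= 1 - l.
Proof. unfold tent, Rmin; destruct Rle_dec; lra. Qed.

Lemma tent_le_half l : 0 <= l <= 1 -> tent l <= 1 / 2.
Proof. intros Hl; destruct (tent_bounds l Hl); lra. Qed.

Lemma tent_eq0 l : 0 <= l <= 1 -> tent l = 0 -> l = 0 \/ l = 1.
Proof. unfold tent, Rmin; destruct Rle_dec; lra. Qed.

Lemma tent_left l : 0 <= l <= 1 / 2 -> tent l = l.
Proof. intros; unfold tent; apply Rmin_left; lra. Qed.

Lemma tent_right l : 1 / 2 <= l <= 1 -> tent l = 1 - l.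
Proof. intros; unfold tent; apply Rmin_right; lra. Qed.

Lemma on_bent_edge s c d b x : on_edge (bent_edge s c d b) x ->
  exists l, 0 <= l <= 1 /\ x = lattice (trace s c d b l).
Proof.
  unfold bent_edge, on_edge, e_a, e_b, e_c; simpl.
  intros [Hx | Hx]; apply lattice_on_seg in Hx as [t [Ht ->]].
  - exists (t / 2); split; [lra|]; f_equal; unfold trace.
    rewrite (tent_left 0), (tent_left (1 / 2)), (tent_left (t / 2)) by lra.
    simpl; f_equal; field.
  - exists ((1 + t) / 2); split; [lra|]; f_equal; unfold trace.
    rewrite (tent_left (1 / 2)), (tent_right 1), (tent_right ((1 + t) / 2)) by lra.
    simpl; f_equal; field.
Qed.

Lemma trace_endpoint s c d b l : 0 <= l <= 1 -> tent l = 0 ->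
  is_endpoint (bent_edge s c d b) (lattice (trace s c d b l)).
Proof.
  intros Hl Ht; unfold is_endpoint, bent_edge, e_a, e_c; simpl.
  destruct (tent_eq0 l Hl Ht) as [-> | ->]; auto.
Qed.

Lemma bent_edge_geometry s c d b :
  let e := bent_edge s c d b in
  dot (psub (e_a e) (e_b e)) (psub (e_c e) (e_b e)) = 3 * s ^ 2 - 1 / 4 /\
  dot (psub (e_a e) (e_b e)) (psub (e_a e) (e_b e)) = 3 * s ^ 2 + 1 / 4 /\
  dot (psub (e_c e) (e_b e)) (psub (e_c e) (e_b e)) = 3 * s ^ 2 + 1 / 4 /\
  cross (psub (e_c e) (e_a e)) (psub (e_b e) (e_a e)) = sqrt 3 * side b * s /\
  e_a e <> e_c e.
Proof.
  unfold bent_edge, e_a, e_b, e_c, trace; simpl.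
  rewrite (tent_left 0), (tent_left (1 / 2)), (tent_right 1) by lra.
  rewrite !psub_lattice, !dot_lattice, !cross_lattice.
  destruct c, d, b; simpl;
    (split; [field | split; [field | split; [field | split; [field |]]]]);
    intros H; apply lattice_inj in H; injection H; lra.
Qed.

Lemma bent_edge_alpha alpha s c d b : 0 <= alpha <= PI -> 0 < s ->
  cos alpha = (3 * s ^ 2 - 1 / 4) / (3 * s ^ 2 + 1 / 4) ->
  alpha_bend_edge alpha (bent_edge s c d b).
Proof.
  intros Ha Hs Hcos.
  destruct (bent_edge_geometry s c d b) as (Hab & Haa & Hcc & Hcross & Hac).
  split; [exact Hac | split].
  - unfold on_line; rewrite Hcross.
    assert (0 < sqrt 3) by (apply sqrt_lt_R0; lra).
    destruct b; simpl; nra.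
  - unfold angle_at, vnorm; rewrite Hab, Haa, Hcc, sqrt_sqrt by nra.
    rewrite <- Hcos; apply acos_cos, Ha.
Qed.

Lemma cos_obtuse_bounds alpha : 2 * PI / 3 < alpha < PI -> -1 < cos alpha < -1 / 2.
Proof.
  intros Ha; pose proof PI_RGT_0; split.
  - rewrite <- cos_PI; apply cos_decreasing_1; lra.
  - replace (-1 / 2) with (cos (PI - PI / 3))
      by (rewrite Rtrigo_facts.cos_pi_minus, cos_PI3; field).
    apply cos_decreasing_1; lra.
Qed.

Lemma bend_offset_exists alpha : 2 * PI / 3 < alpha < PI ->
  exists s, 0 < s < 1 / 6 /\ cos alpha = (3 * s ^ 2 - 1 / 4) / (3 * s ^ 2 + 1 / 4).
Proof.
  intros Ha; destruct (cos_obtuse_bounds alpha Ha) as [Hk1 Hk2].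
  set (k := cos alpha) in *.
  (* [r] solves (3 r - 1/4) / (3 r + 1/4) = k. *)
  set (r := (1 + k) / (12 * (1 - k))).
  assert (Hr : 0 < r < 1 / 36).
  { unfold r; split; [apply Rdiv_lt_0_compat; lra|].
    apply Rmult_lt_reg_r with (12 * (1 - k)); [lra|]; field_simplify; lra. }
  exists (sqrt r).
  assert (Hsq : sqrt r ^ 2 = r) by (rewrite <- Rsqr_pow2; apply Rsqr_sqrt; lra).
  split; [split|].
  - apply sqrt_lt_R0; lra.
  - rewrite <- sqrt_square with (x := 1 / 6) by lra.
    apply sqrt_lt_1; lra.
  - rewrite Hsq; unfold r; field; lra.
Qed.

Lemma level_trace d' s c d b l :
  level d' (trace s c d b l) = level d' (start c d) + l * level d' (tangent d)
    + side b * 2 * s * tent l * level d' (normal d).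
Proof. destruct d'; unfold trace; simpl; ring. Qed.

Lemma along_trace s c d b l :
  along d (trace s c d b l) = along d (start c d) + l
    + side b * 2 * s * tent l * along d (normal d).
Proof. destruct d; unfold trace; simpl; ring. Qed.

Lemma level_tangent d : level d (tangent d) = 0.
Proof. destruct d; simpl; ring. Qed.

Lemma level_normal d : level d (normal d) = 2 \/ level d (normal d) = -2.
Proof. destruct d; simpl; lra. Qed.

Lemma level_tangent_other d d' : d <> d' ->
  level d' (tangent d) = 1 \/ level d' (tangent d) = -1.
Proof. destruct d, d'; simpl; (lra || congruence). Qed.

Lemma level_normal_other d d' : d <> d' ->
  level d' (normal d) = 1 \/ level d' (normal d) = -1.
Proof. destruct d, d'; simpl; (lra || congruence). Qed.

Lemma level_nat d (u v : nat) : exists k : nat, level d (INR u, INR v) = INR k.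
Proof.
  destruct d; simpl; eauto.
  exists (u + v)%nat; rewrite plus_INR; reflexivity.
Qed.

Lemma level_start_nat d' c d : exists k : nat, level d' (start c d) = INR k.
Proof. destruct d; apply level_nat. Qed.

Lemma along_start_nat c d : exists k : nat, along d (start c d) = INR k.
Proof. destruct d; simpl; eauto. Qed.

Lemma start_inj c c' d :
  level d (start c d) = level d (start c' d) ->
  along d (start c d) = along d (start c' d) -> c = c'.
Proof.
  destruct c as [i j], c' as [i' j'], d; cbn [level along start fst snd];
    rewrite ?S_INR; intros H1 H2; f_equal; apply INR_eq; lra.
Qed.

Lemma nat_gap (k k' : nat) : k = k' \/ INR k + 1 <= INR k' \/ INR k' + 1 <= INR k.
Proof.
  destruct (Nat.lt_trichotomy k k') as [H | [H | H]]; auto;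
    right; [left | right]; rewrite <- S_INR; apply le_INR; exact H.
Qed.

Lemma level_own_near s c d b l : 0 <= s -> 0 <= l <= 1 ->
  Rabs (level d (trace s c d b l) - level d (start c d)) = 4 * s * tent l.
Proof.
  intros Hs Hl; rewrite level_trace, level_tangent.
  destruct (tent_bounds l Hl) as [Hm _].
  assert (0 <= s * tent l) by (apply Rmult_le_pos; lra).
  destruct (level_normal d) as [-> | ->], b; simpl; split_Rabs; lra.
Qed.

Lemma level_other_far s c d b l d' (k : nat) : d <> d' -> 0 <= s -> 0 <= l <= 1 ->
  (1 - 2 * s) * tent l <= Rabs (level d' (trace s c d b l) - INR k).
Proof.
  intros Hd Hs Hl; rewrite level_trace.
  destruct (level_start_nat d' c d) as [k0 ->].
  destruct (tent_bounds l Hl) as (Hm & Hml & Hmr).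
  assert (0 <= s * tent l) by (apply Rmult_le_pos; lra).
  destruct (level_tangent_other d d' Hd) as [-> | ->],
    (level_normal_other d d' Hd) as [-> | ->], (nat_gap k0 k) as [-> | [G | G]], b;
    simpl; split_Rabs; lra.
Qed.

Lemma traces_cross s c d b l c' d' b' l' : d <> d' -> 0 < s < 1 / 6 ->
  0 <= l <= 1 -> 0 <= l' <= 1 -> trace s c d b l = trace s c' d' b' l' ->
  tent l = 0 /\ tent l' = 0.
Proof.
  intros Hd Hs Hl Hl' Heq; assert (Hs0 : 0 <= s) by lra.
  destruct (level_start_nat d c d) as [k Hk], (level_start_nat d' c' d') as [k' Hk'].
  pose proof (level_own_near s c d b l Hs0 Hl) as Hnear.
  pose proof (level_own_near s c' d' b' l' Hs0 Hl') as Hnear'.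
  pose proof (level_other_far s c' d' b' l' d k (not_eq_sym Hd) Hs0 Hl') as Hfar.
  pose proof (level_other_far s c d b l d' k' Hd Hs0 Hl) as Hfar'.
  rewrite <- Heq, <- Hk, Hnear in Hfar; rewrite Heq, <- Hk', Hnear' in Hfar'.
  destruct (tent_bounds l Hl), (tent_bounds l' Hl').
  assert (Hsum : (1 - 6 * s) * (tent l + tent l') <= 0) by lra.
  split; nra.
Qed.

Lemma traces_parallel s c d b l c' b' l' : 0 < s < 1 / 6 ->
  0 <= l <= 1 -> 0 <= l' <= 1 -> trace s c d b l = trace s c' d b' l' ->
  (c = c' /\ b = b') \/ (tent l = 0 /\ tent l' = 0).
Proof.
  intros Hs Hl Hl' Heq.
  pose proof (f_equal (level d) Heq) as Hlevel.
  pose proof (f_equal (along d) Heq) as Halong.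
  rewrite !level_trace, !level_tangent in Hlevel; rewrite !along_trace in Halong.
  destruct (level_start_nat d c d) as [k Hk], (level_start_nat d c' d) as [k' Hk'].
  destruct (along_start_nat c d) as [a Ha], (along_start_nat c' d) as [a' Ha'].
  destruct (tent_bounds l Hl), (tent_bounds l' Hl').
  assert (Hm : s * tent l <= s / 2) by (pose proof (tent_le_half l Hl); nra).
  assert (Hm' : s * tent l' <= s / 2) by (pose proof (tent_le_half l' Hl'); nra).
  assert (Hk_eq : k = k').
  { (* both normal offsets are below 1/3, too small to bridge two lattice lines *)
    rewrite Hk, Hk' in Hlevel.
    destruct (nat_gap k k') as [? | [G | G]]; [assumption | exfalso ..];
      destruct (level_normal d) as [N | N]; rewrite N in Hlevel; destruct b, b'; simpl in Hlevel;
      nra. }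
  assert (Hside : side b * tent l = side b' * tent l').
  { rewrite Hk, Hk', Hk_eq in Hlevel.
    destruct (level_normal d) as [N | N]; rewrite N in Hlevel; nra. }
  assert (Hshift : along d (start c d) + l = along d (start c' d) + l').
  { replace (side b' * 2 * s * tent l') with (side b * 2 * s * tent l) in Halong by nra; lra. }
  rewrite Ha, Ha' in Hshift.
  destruct (nat_gap a a') as [<- | [G | G]].
  - assert (l' = l) as -> by lra.
    assert (Hc : c = c') by (apply (start_inj c c' d); congruence).
    destruct b, b'; simpl in Hside; auto; right; split; lra.
  - right; assert (l = 1 /\ l' = 0) as [-> ->] by lra.
    rewrite tent_right, tent_left by lra; lra.
  - right; assert (l = 0 /\ l' = 1) as [-> ->] by lra.
    rewrite tent_left, tent_right by lra; lra.
Qed.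

Lemma dir_eq_dec (d d' : dir) : {d = d'} + {d <> d'}.
Proof. decide equality. Defined.

Lemma traces_meet_at_ends s c d b l c' d' b' l' : (c, d, b) <> (c', d', b') ->
  0 < s < 1 / 6 -> 0 <= l <= 1 -> 0 <= l' <= 1 ->
  trace s c d b l = trace s c' d' b' l' -> tent l = 0 /\ tent l' = 0.
Proof.
  intros Hne Hs Hl Hl' Heq.
  destruct (dir_eq_dec d d') as [<- | Hd].
  - destruct (traces_parallel s c d b l c' b' l') as [[<- <-] | Hends]; tauto.
  - exact (traces_cross s c d b l c' d' b' l' Hd Hs Hl Hl' Heq).
Qed.

Lemma trace_at_vertex s c d b l (u v : nat) : 0 < s < 1 / 6 -> 0 <= l <= 1 ->
  trace s c d b l = (INR u, INR v) -> tent l = 0.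
Proof.
  intros Hs Hl Heq.
  assert (Hd : exists d', d <> d')
    by (destruct d; [exists dir60 | exists dir0 | exists dir0]; discriminate).
  destruct Hd as [d' Hd], (level_nat d' u v) as [k Hk].
  pose proof (level_other_far s c d b l d' k Hd ltac:(lra) Hl) as Hfar.
  rewrite Heq, Hk, Rminus_diag, Rabs_R0 in Hfar.
  destruct (tent_bounds l Hl); nra.
Qed.

Lemma NoDup_list_prod {A B : Type} (xs : list A) (ys : list B) :
  NoDup xs -> NoDup ys -> NoDup (list_prod xs ys).
Proof.
  induction 1 as [|x xs Hx Hxs IH]; intros Hys; simpl; [constructor|].
  apply NoDup_app; [| now apply IH |].
  - apply NoDup_map_NoDup_ForallPairs; [|exact Hys].
    intros y y' _ _ H; now injection H.
  - intros [x' y] H1 H2; apply in_map_iff in H1 as [y' [Hy _]]; injection Hy as <- <-.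
    now apply in_prod_iff in H2 as [H2 _].
Qed.

Lemma nth_map_distinct {A B : Type} (f : A -> B) (xs : list A) (x0 : A) (y0 : B) i j :
  NoDup xs -> (i < length xs)%nat -> (j < length xs)%nat -> i <> j ->
  nth i xs x0 <> nth j xs x0 /\
  nth i (map f xs) y0 = f (nth i xs x0) /\ nth j (map f xs) y0 = f (nth j xs x0).
Proof.
  intros Hxs Hi Hj Hij; split; [|split].
  - intros H; apply Hij; exact (proj1 (NoDup_nth xs x0) Hxs i j Hi Hj H).
  - rewrite nth_indep with (d' := f x0) by (rewrite length_map; exact Hi); apply map_nth.
  - rewrite nth_indep with (d' := f x0) by (rewrite length_map; exact Hj); apply map_nth.
Qed.

Definition grid_points (w n : nat) : list point :=
  map (fun k => lattice (INR (k mod w), INR (k / w))) (seq 0 n).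

Definition grid_bends (w q : nat) : list (nat * nat * dir * bool) :=
  list_prod (list_prod (list_prod (seq 0 (w - 1)) (seq 0 (q - 1))) [dir0; dir60; dir120])
    [true; false].

Definition grid_edges (s : R) (w q : nat) : list edge :=
  map (fun '(c, d, b) => bent_edge s c d b) (grid_bends w q).

Lemma grid_points_length w n : length (grid_points w n) = n.
Proof. unfold grid_points; rewrite length_map, length_seq; reflexivity. Qed.

Lemma grid_points_NoDup w n : NoDup (grid_points w n).
Proof.
  unfold grid_points; apply NoDup_map_NoDup_ForallPairs; [|apply seq_NoDup].
  intros k k' _ _ H; apply lattice_inj in H; injection H as Hmod Hdiv.
  apply INR_eq in Hmod, Hdiv.
  rewrite (Nat.div_mod_eq k w), (Nat.div_mod_eq k' w); lia.
Qed.

Lemma grid_points_lattice w n x : In x (grid_points w n) ->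
  exists u v : nat, x = lattice (INR u, INR v).
Proof. unfold grid_points; intros H; apply in_map_iff in H as [k [<- _]]; eauto. Qed.

Lemma grid_points_in w q n (u v : nat) x y : (q * w <= n)%nat ->
  (u < w)%nat -> (v < q)%nat -> x = INR u -> y = INR v ->
  In (lattice (x, y)) (grid_points w n).
Proof.
  intros Hn Hu Hv -> ->; unfold grid_points; apply in_map_iff.
  exists (v * w + u)%nat; split; [|apply in_seq; nia].
  assert (Hmod : ((v * w + u) mod w = u)%nat) by (symmetry; apply (Nat.mod_unique _ _ v); lia).
  assert (Hdiv : ((v * w + u) / w = v)%nat) by (symmetry; apply (Nat.div_unique _ _ _ u); lia).
  rewrite Hmod, Hdiv; reflexivity.
Qed.

Lemma grid_bends_NoDup w q : NoDup (grid_bends w q).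
Proof.
  unfold grid_bends; repeat apply NoDup_list_prod; try apply seq_NoDup;
    repeat constructor; simpl; intuition discriminate.
Qed.

Lemma grid_edges_length s w q : length (grid_edges s w q) = (6 * ((w - 1) * (q - 1)))%nat.
Proof.
  unfold grid_edges, grid_bends; rewrite length_map, !length_prod, !length_seq; simpl; lia.
Qed.

Lemma grid_bend_ends_in_grid s w q n c d b : (q * w <= n)%nat ->
  In (c, d, b) (grid_bends w q) ->
  In (e_a (bent_edge s c d b)) (grid_points w n) /\
  In (e_c (bent_edge s c d b)) (grid_points w n).
Proof.
  intros Hn Hin; unfold grid_bends in Hin.
  apply in_prod_iff in Hin as [Hin _]; apply in_prod_iff in Hin as [Hin _].
  destruct c as [i j]; apply in_prod_iff in Hin as [Hi Hj]; apply in_seq in Hi, Hj.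
  unfold bent_edge, e_a, e_c, trace; cbn [fst snd]; rewrite (tent_left 0), (tent_right 1) by lra.
  destruct d; cbn [fst snd start tangent normal]; split;
    [ apply (grid_points_in w q n i j) | apply (grid_points_in w q n (S i) j)
    | apply (grid_points_in w q n i j) | apply (grid_points_in w q n i (S j))
    | apply (grid_points_in w q n (S i) j) | apply (grid_points_in w q n i (S j)) ];
    (lia || (rewrite ?S_INR; ring)).
Qed.

Lemma grid_multigraph alpha s w q n : 0 <= alpha <= PI -> 0 < s < 1 / 6 ->
  cos alpha = (3 * s ^ 2 - 1 / 4) / (3 * s ^ 2 + 1 / 4) ->
  (q * w <= n)%nat ->
  alpha_bend_multigraph alpha (grid_points w n) (grid_edges s w q).
Proof.
  intros Ha Hs Hcos Hn; split; [|split; [|split]].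
  - apply grid_points_NoDup.
  - intros e He; apply in_map_iff in He as [[[c d] b] [<- Hin]].
    split; [apply bent_edge_alpha; lra|].
    exact (grid_bend_ends_in_grid s w q n c d b Hn Hin).
  - intros e x He Hx Hon; apply in_map_iff in He as [[[c d] b] [<- _]].
    destruct (grid_points_lattice w n x Hx) as [u [v ->]].
    destruct (on_bent_edge s c d b _ Hon) as [l [Hl Hpt]].
    apply lattice_inj in Hpt as Htrace; symmetry in Htrace.
    rewrite Hpt; apply trace_endpoint; [exact Hl|].
    exact (trace_at_vertex s c d b l u v Hs Hl Htrace).
  - intros i j Hi Hj Hij x Hxi Hxj.
    unfold grid_edges in *; rewrite length_map in Hi, Hj.
    destruct (nth_map_distinct (fun '(c, d, b) => bent_edge s c d b) (grid_bends w q)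
      (0%nat, 0%nat, dir0, true) ((0, 0), (0, 0), (0, 0)) i j (grid_bends_NoDup w q) Hi Hj Hij)
      as (Hne & Hei & Hej).
    rewrite Hei in Hxi |- *; rewrite Hej in Hxj |- *.
    destruct (nth i _ _) as [[c d] b], (nth j _ _) as [[c' d'] b'].
    destruct (on_bent_edge s c d b x Hxi) as [l [Hl Hpt]].
    destruct (on_bent_edge s c' d' b' x Hxj) as [l' [Hl' Hpt']].
    assert (Htrace : trace s c d b l = trace s c' d' b' l')
      by (apply lattice_inj; congruence).
    destruct (traces_meet_at_ends s c d b l c' d' b' l' Hne Hs Hl Hl' Htrace).
    rewrite Hpt at 1; rewrite Hpt'.
    split; apply trace_endpoint; assumption.
Qed.

Lemma sqrt_grid_count_nat n : (1 <= n)%nat ->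
  (6 * n <= 6 * ((Nat.sqrt n - 1) * (n / Nat.sqrt n - 1)) + 24 * Nat.sqrt n)%nat.
Proof.
  intros Hn; pose proof (Nat.sqrt_spec' n) as [Hlo Hhi].
  assert (Hw : (0 < Nat.sqrt n)%nat) by (destruct (Nat.sqrt n); lia).
  pose proof (Nat.div_mod_eq n (Nat.sqrt n)) as Hdm.
  pose proof (Nat.mod_upper_bound n (Nat.sqrt n) ltac:(lia)) as Hmod.
  set (w := Nat.sqrt n) in *; set (q := (n / w)%nat) in *.
  assert (Hq : (w <= q <= w + 2)%nat) by nia.
  destruct w as [|w']; [lia|]; destruct q as [|q']; [lia|].
  rewrite !Nat.sub_succ, !Nat.sub_0_r; nia.
Qed.

Lemma sqrt_grid_count n : (1 <= n)%nat ->
  6 * INR n - 24 * sqrt (INR n) <= INR (6 * ((Nat.sqrt n - 1) * (n / Nat.sqrt n - 1))).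
Proof.
  intros Hn; pose proof (le_INR _ _ (sqrt_grid_count_nat n Hn)) as Hcount.
  rewrite plus_INR, !mult_INR in Hcount; rewrite !mult_INR.
  assert (Hw : INR (Nat.sqrt n) <= sqrt (INR n)).
  { rewrite <- (sqrt_square (INR (Nat.sqrt n))) by apply pos_INR.
    apply sqrt_le_1_alt; rewrite <- mult_INR; apply le_INR, Nat.sqrt_spec'. }
  simpl (INR 6) in *; simpl (INR 24) in *; lra.
Qed.

Theorem proposition12 (alpha : R) (Halpha : 2 * PI / 3 < alpha < PI) :
  exists c : R, c > 0 /\
    forall n : nat, (1 <= n)%nat ->
      exists (P : list point) (E : list edge),
        length P = n /\ alpha_bend_multigraph alpha P E /\
        INR (length E) >= 6 * INR n - c * sqrt (INR n).
Proof.
  destruct (bend_offset_exists alpha Halpha) as [s [Hs Hcos]].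
  exists 24; split; [lra|]; intros n Hn.
  exists (grid_points (Nat.sqrt n) n), (grid_edges s (Nat.sqrt n) (n / Nat.sqrt n)).
  split; [apply grid_points_length|]; split.
  - pose proof PI_RGT_0; apply grid_multigraph; try lra.
    rewrite Nat.mul_comm; apply Nat.Div0.mul_div_le.
  - rewrite grid_edges_length; apply Rle_ge, sqrt_grid_count, Hn.
Qed.
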